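(* There exist positive integers $n<m$ and a distribution $F$ such that the TWDPP mechanism is asymptotically stable with respect to $F^n$, but the UDPP mechanism is unstable (not asymptotically stable) with respect to $F^n$.
   Context: Dynamic posted-price setting: at each time step a block with $m$ slots is produced; $n$ bidders arrive with values drawn i.i.d. from $F$ (joint distribution $F^n$), each participating once and bidding truthfully. Given posted price $q>0$, $M(q)=\{i:b_i\ge q\}$. Both mechanisms use the random maximal allocation: $B$ is a uniformly random subset of $M(q)$ of size $\min\{m,|M(q)|\}$; each $i\in B$ gets a slot and pays $q$; the next price is $T(q,B)$. UDPP: $T_U(q,B)=\alpha\frac{|B|}{m}(1+\delta)q+(1-\alpha)q$. TWDPP: $T_{TW}(q,B)=\alpha\frac1m\sum_{i\in B}\min\{b_i,(1+\delta)q\}+(1-\alpha)q$ if $|B|<m$, and $\alpha(1+\delta)q+(1-\alpha)q$ if $|B|=m$. Here $\alpha\in(0,1)$, $\delta\in(0,\infty)$. Let $E_T(q)=\mathbb{E}[T(q,B)]$ over values and allocation; an equilibrium price is $z$ with $E_T(z)=z$. The mechanism is asymptotically stable with respect to $F^n$ if for every $q_0>0$ the sequence $q_{k+1}=E_T(q_k)$ converges to an equilibrium price; otherwise it is unstable. *)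

From HB Require Import structures.
From mathcomp Require Import all_boot all_order all_algebra.
From mathcomp Require Import all_classical all_reals all_analysis.
Set Implicit Arguments. Unset Strict Implicit. Unset Printing Implicit Defensive.
Import Order.TTheory GRing.Theory Num.Theory.
Import numFieldNormedType.Exports.
Local Open Scope classical_set_scope.
Local Open Scope ring_scope.

Section Mechanisms.
Variable R : realType.

(* Expectation of a (nonnegative) function of n i.i.d. values with law F,
   i.e. the integral w.r.t. the product measure F^n, written as an iterated
   integral (one coordinate at a time). *)
Fixpoint iidE (F : probability R R) (n : nat) : (n.-tuple R -> \bar R) -> \bar R :=
  match n return (n.-tuple R -> \bar R) -> \bar R with
  | 0 => fun g => g [tuple]
  | n'.+1 => fun g => (\int[F]_x iidE F (fun t : n'.-tuple R => g [tuple of x :: t]))%E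
  end.

Definition Mset (n : nat) (q : R) (b : n.-tuple R) : {set 'I_n} :=
  [set i | q <= tnth b i].

(* possible outcomes of the random maximal allocation: subsets of M(q)
   of size min(m, |M(q)|); B is drawn uniformly among them *)
Definition allocs (n m : nat) (q : R) (b : n.-tuple R) : {set {set 'I_n}} :=
  [set B : {set 'I_n} | (B \subset Mset q b) && (#|B| == minn m #|Mset q b|)].

Definition allocE (n m : nat) (T : R -> n.-tuple R -> {set 'I_n} -> R)
  (q : R) (b : n.-tuple R) : R :=
  (\sum_(B in allocs m q b) T q b B) / (#|allocs m q b|)%:R.

Definition ET (F : probability R R) (n m : nat)
  (T : R -> n.-tuple R -> {set 'I_n} -> R) (q : R) : R :=
  fine (iidE F (fun b => (allocE m T q b)%:E)).

Definition T_UDPP (n m : nat) (alpha delta : R)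
  (q : R) (b : n.-tuple R) (B : {set 'I_n}) : R :=
  alpha * ((#|B|)%:R / m%:R) * (1 + delta) * q + (1 - alpha) * q.

Definition T_TWDPP (n m : nat) (alpha delta : R)
  (q : R) (b : n.-tuple R) (B : {set 'I_n}) : R :=
  if (#|B| < m)%N then
    alpha * (1 / m%:R) * (\sum_(i in B) Num.min (tnth b i) ((1 + delta) * q))
      + (1 - alpha) * q
  else alpha * (1 + delta) * q + (1 - alpha) * q.

Definition equilibrium_price (F : probability R R) (n m : nat)
  (T : R -> n.-tuple R -> {set 'I_n} -> R) (z : R) : Prop :=
  0 < z /\ ET F m T z = z.

Definition asymptotically_stable (F : probability R R) (n m : nat)
  (T : R -> n.-tuple R -> {set 'I_n} -> R) : Prop :=
  forall q0 : R, 0 < q0 ->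
    exists z : R, equilibrium_price F m T z /\
      (fun k : nat => iter k (ET F m T) q0) @ \oo --> z.

End Mechanisms.

(* Take F to be the point mass at 1 and m = n + 1 slots, with n large enough
   that z := n / m satisfies z (1 + delta) > 1.  Every bidder then gets a slot
   whenever q <= 1, so E_T is an explicit piecewise-linear map.  For UDPP it
   is q |-> (1 - alpha + alpha (1 + delta) z) q > q on (0, 1] and
   q |-> (1 - alpha) q < q above 1: there is no equilibrium price at all.  For
   TWDPP the capped payments make E_T the contraction
   q |-> (1 - alpha) q + alpha z towards z on [1 / (1 + delta), 1]; the map
   expands geometrically below that band and shrinks geometrically above 1,
   so every orbit enters the band, stays there, and converges to z. *)

From HB Require Import structures.
From mathcomp Require Import all_boot all_order all_algebra.
From mathcomp Require Import all_classical all_reals all_analysis.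
From mathcomp Require Import measurable_realfun lra ring.
Set Implicit Arguments. Unset Strict Implicit. Unset Printing Implicit Defensive.
Import Order.TTheory GRing.Theory Num.Theory.
Import numFieldNormedType.Exports.
Import HBNNSimple.
Local Open Scope classical_set_scope.
Local Open Scope ring_scope.

Section DiracIntegral.
Context d (T : measurableType d) (R : realType) (a : T).
Hypothesis ma : measurable [set a].
Local Open Scope ereal_scope.

Lemma sintegral_dirac (h : {nnsfun T >-> R}) : sintegral \d_a h = (h a)%:E.
Proof.
rewrite -integralT_nnsfun integral_dirac //=; last first.
  by apply/measurable_EFinP; exact: measurable_funPT.
by rewrite /dirac indicE in_setT mul1e.
Qed.

Lemma ge0_integral_dirac_EFin (f : T -> R) : (forall x, (0 <= f x)%R) ->
  \int[\d_a]_x (f x)%:E = (f a)%:E.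
Proof.
move=> f0; rewrite ge0_integralTE => [|x]; last by rewrite lee_fin.
apply/le_anti/andP; split.
  by apply: ge_ereal_sup => _ [h hf <-]; rewrite sintegral_dirac; exact: hf.
pose h := scale_nnsfun (indic_nnsfun R ma) (f0 a).
apply: ereal_sup_ubound; exists h; last first.
  by rewrite sintegral_dirac /= mindicE mem_set //= mulr1.
move=> x /=; rewrite mindicE lee_fin.
have [->|xa] := eqVneq x a; first by rewrite mem_set //= mulr1.
by rewrite memNset ?mulr0 //= => xa'; rewrite xa' eqxx in xa.
Qed.

(* Unlike [integral_dirac], no measurability of [f] is needed. *)
Lemma integral_dirac_EFin (f : T -> R) : \int[\d_a]_x (f x)%:E = (f a)%:E.
Proof.
rewrite integralE.
under eq_integral do rewrite funeposE -EFin_max.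
under [X in _ - X]eq_integral do rewrite funenegE -EFin_max.
rewrite !ge0_integral_dirac_EFin => [|x|x]; rewrite ?le_max ?lexx ?orbT //.
by rewrite -EFinB; congr EFin; rewrite /Num.max; case: ifP; case: ifP; lra.
Qed.

End DiracIntegral.

Section PointMassValues.
Variable R : realType.

Lemma iidE_dirac n (v : R) (g : n.-tuple R -> R) :
  iidE (\d_v : probability R R) (fun b => (g b)%:E) = (g (nseq_tuple n v))%:E.
Proof.
elim: n g => [|n IHn] g /=; first by congr (g _)%:E; exact: val_inj.
under eq_integral do rewrite (IHn (fun t => g [tuple of _ :: t])).
by rewrite integral_dirac_EFin //=; congr (g _)%:E; exact: val_inj.
Qed.

Lemma Mset_nseq n (q v : R) :
  Mset q (nseq_tuple n v) = if q <= v then [set: 'I_n]%SET else finset.set0.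
Proof. by apply/setP => i; rewrite inE tnth_nseq; case: ifP; rewrite inE. Qed.

Lemma allocs_ltn n m (q : R) (b : n.-tuple R) : (n < m)%N ->
  allocs m q b = [set Mset q b]%SET.
Proof.
move=> ltnm; apply/setP => B; rewrite !inE.
have -> : minn m #|Mset q b| = #|Mset q b|.
  by apply/minn_idPr/ltnW/(leq_ltn_trans _ ltnm); rewrite -[X in (_ <= X)%N]card_ord max_card.
rewrite eqEcard; case sBM: (B \subset _) => //=.
by rewrite eqn_leq (subset_leq_card sBM).
Qed.

Lemma allocE_ltn n m T (q : R) (b : n.-tuple R) : (n < m)%N ->
  allocE m T q b = T q b (Mset q b).
Proof. by move=> ltnm; rewrite /allocE allocs_ltn // big_set1 cards1 divr1. Qed.

Lemma ET_dirac n m T (q v : R) : (n < m)%N ->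
  ET (\d_v : probability R R) m T q = T q (nseq_tuple n v) (Mset q (nseq_tuple n v)).
Proof. by move=> ltnm; rewrite /ET iidE_dirac /= allocE_ltn. Qed.

Lemma ET_TWDPP_dirac n m (alpha delta q v : R) : (n < m)%N ->
  ET (\d_v : probability R R) m (@T_TWDPP R n m alpha delta) q =
  if q <= v then alpha * (n%:R / m%:R) * Num.min v ((1 + delta) * q) + (1 - alpha) * q
  else (1 - alpha) * q.
Proof.
move=> ltnm; rewrite ET_dirac // Mset_nseq /T_TWDPP.
have [_|_] := leP q v; last first.
  by rewrite cards0 (leq_ltn_trans _ ltnm) // big_set0 mulr0 add0r.
rewrite cardsT card_ord ltnm.
under eq_bigr do rewrite tnth_nseq.
by rewrite sumr_const cardsT card_ord -mulr_natr; ring.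
Qed.

Lemma ET_UDPP_dirac n m (alpha delta q v : R) : (n < m)%N ->
  ET (\d_v : probability R R) m (@T_UDPP R n m alpha delta) q =
  if q <= v then alpha * (n%:R / m%:R) * (1 + delta) * q + (1 - alpha) * q
  else (1 - alpha) * q.
Proof.
move=> ltnm; rewrite ET_dirac // Mset_nseq /T_UDPP.
by have [_|_] := leP q v; rewrite ?cardsT ?card_ord // cards0 !(mul0r, mulr0, add0r).
Qed.

End PointMassValues.

Lemma exists_expr_lt (R : archiRealFieldType) (r eps : R) :
  0 <= r -> r < 1 -> 0 < eps -> exists k, r ^+ k < eps.
Proof.
move=> r_ge0 r_lt1 eps_gt0.
have /cvg_expr r_cvg0 : `|r| < 1 by rewrite ger0_norm.
by have [N _ rN] := cvgr_lt 0 r_cvg0 eps eps_gt0; exists N; apply: rN => /=.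
Qed.

Lemma iter_mul_on (R : pzRingType) (P : R -> Prop) (g : R -> R) (c q : R) k :
  (forall x, P x -> g x = c * x) -> (forall i, (i < k)%N -> P (iter i g q)) ->
  iter k g q = c ^+ k * q.
Proof.
move=> gP; elim: k => [|k IHk] Pk; first by rewrite mul1r.
have Pk' i : (i < k)%N -> P (iter i g q) by move/ltnW; exact: Pk.
rewrite iterS gP; last exact: Pk.
by rewrite IHk // exprS mulrA.
Qed.

Section PiecewiseLinearDynamics.
Variables (R : realType) (g : R -> R) (r z a c : R).
Hypotheses (r_gt0 : 0 < r) (r_lt1 : r < 1) (a_gt0 : 0 < a) (a_le_z : a <= z).
Hypotheses (z_le1 : z <= 1) (c_gt1 : 1 < c) (ca_le1 : c * a <= 1).
Hypothesis g_above : forall q, 1 < q -> g q = r * q.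
Hypothesis g_band : forall q, a <= q -> q <= 1 -> g q = (1 - r) * z + r * q.
Hypothesis g_below : forall q, 0 < q -> q < a -> g q = c * q.

Lemma g_gt0 q : 0 < q -> 0 < g q.
Proof.
move=> q_gt0; have [q_gt1|q_le1] := ltP 1 q; first by rewrite g_above ?mulr_gt0.
have [a_le_q|q_lt_a] := leP a q; last by rewrite g_below // mulr_gt0 // (lt_trans ltr01).
by rewrite g_band // addr_gt0 // mulr_gt0 // ?subr_gt0 // (lt_le_trans a_gt0).
Qed.

Lemma g_le1 q : 0 < q -> q <= 1 -> g q <= 1.
Proof.
move=> q_gt0 q_le1; have [a_le_q|q_lt_a] := leP a q.
  have : 0 <= 1 - r by rewrite subr_ge0 ltW.
  move/ler_piMr/(_ z_le1); have := ler_piMr (ltW r_gt0) q_le1.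
  rewrite g_band //; lra.
by rewrite g_below //; apply: le_trans ca_le1; rewrite ler_wpM2l ?ltW // (lt_trans ltr01).
Qed.

Lemma iter_gt0 k q : 0 < q -> 0 < iter k g q.
Proof. by move=> q_gt0; elim: k => // k IHk; rewrite iterS g_gt0. Qed.

Lemma iter_le1 k q : 0 < q -> q <= 1 -> iter k g q <= 1.
Proof. by move=> q_gt0 q_le1; elim: k => // k IHk; rewrite iterS g_le1 ?iter_gt0. Qed.

Lemma g_ge q : a <= q -> q <= 1 -> a <= g q.
Proof.
move=> a_le_q q_le1; have := ler_wpM2l (ltW r_gt0) a_le_q.
have : 0 <= 1 - r by rewrite subr_ge0 ltW.
move/ler_wpM2l/(_ _ _ a_le_z); rewrite g_band //; lra.
Qed.

Lemma iter_band_mem k q : a <= q -> q <= 1 -> a <= iter k g q <= 1.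
Proof.
move=> a_le_q q_le1; have q_gt0 := lt_le_trans a_gt0 a_le_q.
rewrite iter_le1 // andbT; elim: k => // k IHk.
by rewrite iterS g_ge // iter_le1.
Qed.

Lemma iter_band k q : a <= q -> q <= 1 -> iter k g q = z + r ^+ k * (q - z).
Proof.
move=> a_le_q q_le1; elim: k => [|k IHk]; first by rewrite mul1r addrC subrK.
have /andP[lo hi] := iter_band_mem k a_le_q q_le1.
by rewrite iterS g_band // IHk exprS; ring.
Qed.

Lemma exists_iter_le1 q : 0 < q -> exists k, iter k g q <= 1.
Proof.
move=> q_gt0; apply/not_existsP => iter_gt1.
have iterE k : iter k g q = r ^+ k * q.
  by apply: (iter_mul_on (P := fun x => 1 < x)) => // i _; rewrite ltNge; apply/negP.
have qV_gt0 : 0 < q^-1 by rewrite invr_gt0.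
have [k] := exists_expr_lt (ltW r_gt0) r_lt1 qV_gt0.
by rewrite -div1r ltr_pdivlMr // -iterE => /ltW; exact: iter_gt1.
Qed.

Lemma exists_iter_ge q : 0 < q -> exists k, a <= iter k g q.
Proof.
move=> q_gt0; apply/not_existsP => iter_lt_a.
have iterE k : iter k g q = c ^+ k * q.
  apply: (iter_mul_on (P := fun x => 0 < x < a)) => [x /andP[]|i _]; first exact: g_below.
  by rewrite iter_gt0 //= ltNge; apply/negP.
have c_gt0 : 0 < c := lt_trans ltr01 c_gt1.
have cV_ge0 : 0 <= c^-1 by rewrite invr_ge0 ltW.
have cV_lt1 : c^-1 < 1 by rewrite invf_lt1.
have [k] := exists_expr_lt cV_ge0 cV_lt1 (divr_gt0 q_gt0 a_gt0).
rewrite exprVn ltr_pdivlMr // ltr_pdivrMl ?exprn_gt0 // -iterE => /ltW.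
exact: iter_lt_a.
Qed.

Lemma iter_cvg q : 0 < q -> iter k g q @[k --> \oo] --> z.
Proof.
move=> q_gt0; have [k1 q1_le1] := exists_iter_le1 q_gt0.
have q1_gt0 := iter_gt0 k1 q_gt0.
have [k2 a_le_q2] := exists_iter_ge q1_gt0.
have q2_le1 := iter_le1 k2 q1_gt0 q1_le1.
set q2 := iter k2 g (iter k1 g q) in a_le_q2 q2_le1.
rewrite -(cvg_shiftn (k2 + k1)).
have -> : [sequence iter (k + (k2 + k1)) g q]_k = (fun k => z + r ^+ k * (q2 - z)).
  by apply/funext => k /=; rewrite 2!iterD iter_band.
have /cvg_expr r_cvg0 : `|r| < 1 by rewrite ger0_norm ?ltW.
have := cvgD (cvg_cst z) (@cvgMr_tmp _ _ _ _ _ _ (q2 - z) r_cvg0).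
by rewrite mul0r addr0; apply.
Qed.

End PiecewiseLinearDynamics.

Lemma exists_nat_ratio_gt (R : archiRealFieldType) (delta : R) : 0 < delta ->
  exists2 n : nat, (0 < n)%N & 1 < n%:R / n.+1%:R * (1 + delta).
Proof.
move=> delta_gt0; set n := (Num.truncn delta^-1).+1; exists n => //.
have : 1 < n%:R * delta by rewrite -ltr_pdivrMr // div1r truncnS_gt.
by rewrite mulrAC ltr_pdivlMr // -natr1; lra.
Qed.

Section PointMassOne.
Variables (R : realType) (n m : nat) (alpha delta : R).
Hypotheses (alpha_gt0 : 0 < alpha) (ltnm : (n < m)%N).
Let z := n%:R / m%:R : R.
Hypothesis z_overshoot : 1 < z * (1 + delta).

Lemma TWDPP_dirac1_stable : alpha < 1 -> 0 < delta ->
  asymptotically_stable (\d_(1 : R) : probability R R) m (@T_TWDPP R n m alpha delta).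
Proof.
move=> alpha_lt1 delta_gt0 q0 q0_gt0.
have m_gt0 : (0 < m)%N by apply: leq_ltn_trans ltnm.
have z_le1 : z <= 1 by rewrite ler_pdivrMr ?ltr0n // mul1r ler_nat ltnW.
have d1_gt0 : 0 < 1 + delta by lra.
(* Below [a] the cap [(1 + delta) q] is not reached, so E_T is linear there. *)
set a := (1 + delta)^-1.
have a_gt0 : 0 < a by rewrite invr_gt0.
have a_le_z : a <= z by rewrite /a -div1r ler_pdivrMr // ltW.
have a_le1 : a <= 1 := le_trans a_le_z z_le1.
set g := ET _ m _.
have gE q : g q = if q <= 1
    then alpha * z * Num.min 1 ((1 + delta) * q) + (1 - alpha) * q
    else (1 - alpha) * q by exact: ET_TWDPP_dirac.
have g_band q : a <= q -> q <= 1 -> g q = (1 - (1 - alpha)) * z + (1 - alpha) * q.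
  move=> a_le_q q_le1; rewrite gE q_le1 min_l; first by ring.
  by have := ler_wpM2l (ltW d1_gt0) a_le_q; rewrite /a mulfV ?gt_eqF.
exists z; split.
  split; [exact: lt_le_trans a_le_z | rewrite -/g g_band //; ring].
apply: (iter_cvg (r := 1 - alpha) (a := a) (c := 1 - alpha + alpha * (1 + delta) * z)) => //.
- by rewrite subr_gt0.
- by rewrite ltrBlDr ltrDl.
- have : 0 < alpha * (z * (1 + delta) - 1) by rewrite mulr_gt0 // subr_gt0.
  lra.
- have := ler_piMr (ltW alpha_gt0) z_le1.
  have : 0 <= 1 - alpha by rewrite subr_ge0 ltW.
  move/ler_piMr/(_ a_le1).
  have -> : (1 - alpha + alpha * (1 + delta) * z) * a =
            (1 - alpha) * a + alpha * z * (a * (1 + delta)) by ring.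
  rewrite mulVf ?gt_eqF // mulr1; lra.
- by move=> q q_gt1; rewrite gE leNgt q_gt1.
- move=> q q_gt0 q_lt_a; have q_le1 : q <= 1 by apply: ltW; apply: lt_le_trans a_le1.
  rewrite gE q_le1 min_r; first by ring.
  have : (1 + delta) * q < (1 + delta) * a by rewrite ltr_pM2l.
  by rewrite /a mulfV ?gt_eqF // => /ltW.
Qed.

Lemma UDPP_dirac1_unstable :
  ~ asymptotically_stable (\d_(1 : R) : probability R R) m (@T_UDPP R n m alpha delta).
Proof.
move=> /(_ 1 ltr01) [w [[w_gt0 +] _]]; rewrite ET_UDPP_dirac // -/z.
have [_ Ew|_ Ew] := leP w 1; last by have := mulr_gt0 alpha_gt0 w_gt0; lra.
have : 0 < alpha * w * (z * (1 + delta) - 1) by rewrite !mulr_gt0 // subr_gt0.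
lra.
Qed.

End PointMassOne.

Theorem mainTheorem6 (R : realType) (alpha delta : R) :
  0 < alpha -> alpha < 1 -> 0 < delta ->
  exists (n m : nat) (F : probability R R),
    (0 < n)%N /\ (n < m)%N /\
    @asymptotically_stable R F n m (@T_TWDPP R n m alpha delta) /\
    ~ @asymptotically_stable R F n m (@T_UDPP R n m alpha delta).
Proof.
move=> alpha_gt0 alpha_lt1 delta_gt0.
have [n n_gt0 overshoot] := exists_nat_ratio_gt delta_gt0.
exists n, n.+1, \d_(1 : R); do !split => //.
  exact: TWDPP_dirac1_stable.
exact: UDPP_dirac1_unstable.
Qed.
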